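(* Let $\vec{k}=(k_1,\dots,k_n)$ be a vector of positive integers and let $\overline{D}$ be a $\vec{k}$-Dyck path with $\operatorname{area}(\overline{D})>0$. Let $\mathbb{S}$ be the rightmost red arrow of $\overline{D}$ among the red arrows whose starting rank is maximal among all red arrows, and let $\mathbb{W}$ be the step immediately following $\mathbb{S}$ (which is a blue arrow). Let $\overline{D}'$ be the word obtained from $\overline{D}$ by interchanging the two adjacent letters $\mathbb{S}$ and $\mathbb{W}$ (so $\overline{D}'$ is again a $\vec{k}$-Dyck path, with $\operatorname{area}(\overline{D}')=\operatorname{area}(\overline{D})-1$). Let $D=\Phi(\overline{D})$ and $D'=\Phi(\overline{D}')$. Then $$\operatorname{dinv}(\overline{D})-\operatorname{dinv}(\overline{D}')=\operatorname{area}(D)-\operatorname{area}(D').$$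
   Context: For a vector $\vec{k}=(k_1,\dots,k_n)$ of positive integers put $|\vec{k}|=\sum_i k_i$. A $\vec{k}$-Dyck path is a word $D=\sigma_1\cdots\sigma_N$, $N=|\vec{k}|+n$, consisting of $n$ red arrows and $|\vec{k}|$ blue arrows $W$, where the $j$-th red arrow from the left is $S^{k_j}$ of length $\ell=k_j$ and value $k_j$, and each $W$ has value $-1$. Ranks: $r_1=0$, $r_{m+1}=r_m+(\text{value of }\sigma_m)$, required to satisfy $r_m\ge0$ for all $m$. The starting rank of $\sigma_m$ is $r(\sigma_m)=r_m$ and its end rank is $\dot r(\sigma_m)=r_{m+1}$. (Geometrically: a path from $(0,0)$ to $(N,0)$ never below the horizontal axis with up steps $(1,k_j)$ and down steps $(1,-1)$; ranks are starting heights.) Write $A<B$ if step $A$ is left of step $B$, and $A<^sB$ if $r(A)<r(B)$, or $r(A)=r(B)$ and $B<A$. The sweep map $\Phi$ sends $D$ to the word listing its steps in increasing $<^s$ order; this is again a Dyck path for some rearrangement of $\vec{k}$. $\operatorname{area}(D)=\sum_S r(S)$ over red arrows $S$. $\operatorname{dinv}(D)$ = (sweep dinv) + (red dinv), where sweep dinv is the number of pairs (blue arrow $W$, red arrow $S$) with $W<S$ and $W$ sweeping $S$, i.e. $W$ intersects $S$ when moved to the right past $S$ along a line of slope $0<\epsilon\ll1$; equivalently $r(S)\le r(W)\le\dot r(S)$; and red dinv is $\sum_{S_i<S_j}\chi(r(S_i)\ge r(S_j)\ \&\ \dot r(S_j)>\dot r(S_i))(\dot r(S_j)-\dot r(S_i))+\sum_{S_i<S_j}\chi(r(S_i)<r(S_j)\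 \&\ \dot r(S_j)<\dot r(S_i))(\dot r(S_i)-\dot r(S_j))$ over pairs of red arrows. *)

From mathcomp Require Import all_boot all_order all_algebra.
Set Implicit Arguments. Unset Strict Implicit. Unset Printing Implicit Defensive.
Import Order.TTheory GRing.Theory Num.Theory.

(* A step of a path: [Some k] is the red arrow S^k (value k),
   [None] is the blue arrow W (value -1). *)
Definition step := option nat.

Definition is_red (x : step) : bool := x != None.

Definition value (x : step) : int :=
  match x with Some k => (k : int) | None => (-1)%R end.

Local Open Scope ring_scope.

(* rank w m = r_{m+1} (0-indexed): sum of values of the first m steps;
   the starting rank of step i (0-indexed) is rank w i. *)
Definition rank (w : seq step) (m : nat) : int :=
  \sum_(i < m) value (nth None w i).

Definition rdot (w : seq step) (i : nat) : int := rank w i.+1.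

(* w is a k-Dyck path: the red arrows, read left to right, are
   S^{k_1}, ..., S^{k_n}; there are |k| blue arrows; all ranks r_1..r_{N+1} >= 0.
   (k is assumed to consist of positive integers separately.) *)
Definition is_Dyck (k : seq nat) (w : seq step) : bool :=
  [&& pmap id w == k,
      count (pred1 None) w == sumn k &
      all (fun m => 0 <= rank w m) (iota 0 (size w).+1)].

Definition sweep_le (w : seq step) (i j : nat) : bool :=
  (rank w i < rank w j) || ((rank w i == rank w j) && (j <= i)%N).

Definition sweep (w : seq step) : seq step :=
  [seq nth None w i | i <- sort (sweep_le w) (iota 0 (size w))].

Definition area (w : seq step) : int :=
  \sum_(i < size w | is_red (nth None w i)) rank w i.

Definition sweep_dinv (w : seq step) : int :=
  \sum_(i < size w) \sum_(j < size w |
      [&& (i < j)%N, nth None w i == None, is_red (nth None w j) &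
          (rank w j <= rank w i <= rdot w j)]) 1.

Definition red_dinv (w : seq step) : int :=
  \sum_(i < size w) \sum_(j < size w |
      [&& (i < j)%N, is_red (nth None w i) & is_red (nth None w j)])
    ((if (rank w j <= rank w i) && (rdot w i < rdot w j)
      then rdot w j - rdot w i else 0)
   + (if (rank w i < rank w j) && (rdot w j < rdot w i)
      then rdot w i - rdot w j else 0)).

Definition dinv (w : seq step) : int := sweep_dinv w + red_dinv w.

Definition swap_adj (w : seq step) (s : nat) : seq step :=
  take s w ++ [:: nth None w s.+1; nth None w s] ++ drop s.+2 w.

(* Write dinv D - area (Phi D) as a double sum, over ordered pairs of steps of
   D, of a kernel that only sees the two steps with their positions and starting
   ranks: for dinv this is the definition, and for area (Phi D) it holds because
   the starting rank in Phi D of a red arrow is the total value of the steps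
   preceding it in the sweep order.
   Swapping S = S^k (starting rank r) with the following W changes only the
   steps at positions s and s+1, so the double sums for D' and D differ by the
   interaction of every other step with this pair plus the 2x2 block of the
   pair, and the block contributes 1.  Because S is the rightmost red arrow of
   maximal starting rank, a step left of S contributes +1 or -1 exactly when it
   crosses the level r+k-1 upwards or downwards, and a step right of W likewise
   for the level r-1.  These contributions telescope: the part of D before S
   runs from 0 to r, both below r+k-1, so it contributes 0, while the part after
   W runs from r+k-1 down to 0 across r-1, so it contributes -1. *)

From mathcomp Require Import all_boot all_order all_algebra.
From mathcomp Require Import zify ring.
Import Order.TTheory GRing.Theory Num.Theory.
Set Implicit Arguments. Unset Strict Implicit. Unset Printing Implicit Defensive.
Local Open Scope ring_scope.

Lemma rank0 w : rank w 0 = 0.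
Proof. by rewrite /rank big_ord0. Qed.

Lemma rankS w m : rank w m.+1 = rank w m + value (nth None w m).
Proof. by rewrite /rank big_ord_recr. Qed.

Lemma rdotE w i : rdot w i = rank w i + value (nth None w i).
Proof. exact: rankS. Qed.

Lemma rank_size w :
  rank w (size w) = (sumn (pmap id w))%:Z - (count (pred1 None) w)%:Z.
Proof.
rewrite /rank; elim: w => [|x w IH]; first by rewrite big_ord0.
by rewrite big_ord_recl /= IH; case: x => [k|] /=; rewrite ?natrD; lia.
Qed.

Lemma is_Dyck_rank_size k w : is_Dyck k w -> rank w (size w) = 0.
Proof. by case/and3P=> /eqP red_w /eqP blue_w _; rewrite rank_size red_w blue_w subrr. Qed.

Lemma is_Dyck_red_gt0 k w j kj : all (fun x => 0 < x)%N k -> is_Dyck k w ->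
  nth None w j = Some kj -> (0 < kj)%N.
Proof.
move=> k_pos /and3P[/eqP red_w _ _] w_j; apply: (allP k_pos).
have lt_jn : (j < size w)%N.
  by rewrite ltnNge; apply/negP => /(nth_default None); rewrite w_j.
by rewrite -red_w mem_pmap map_id -w_j mem_nth.
Qed.

Lemma area_gt0_max_rank w s : 0 < area w ->
  (forall j, (j < size w)%N -> is_red (nth None w j) -> rank w j <= rank w s) ->
  0 < rank w s.
Proof.
move=> area_gt0 max_s; rewrite ltNge; apply/negP => r_le0.
move: area_gt0; rewrite ltNge => /negP; apply; apply: sumr_le0 => i red_i.
exact: le_trans (max_s i (ltn_ord i) red_i) r_le0.
Qed.

Section SwapAdj.
Variables (w : seq step) (s : nat).
Hypothesis lt_s1_size : (s.+1 < size w)%N.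

Lemma size_swap_adj : size (swap_adj w s) = size w.
Proof.
by rewrite /swap_adj !size_cat size_take size_drop /= (_ : (s < size w)%N); lia.
Qed.

Lemma nth_swap_adj i :
  nth None (swap_adj w s) i =
  if i == s then nth None w s.+1 else if i == s.+1 then nth None w s else nth None w i.
Proof.
rewrite /swap_adj nth_cat size_take (_ : (s < size w)%N); last by lia.
case: (ltngtP i s) => [lt_is|lt_si|->]; last by rewrite subnn.
- by rewrite nth_take // (_ : (i == s.+1) = false) //; lia.
- rewrite nth_cat /=; case: (ltngtP i s.+1) => [|lt_s1i|->]; [lia| |by rewrite subSnn].
  by rewrite (_ : (i - s < 2)%N = false) ?nth_drop; [congr nth; lia|lia].
Qed.

Lemma rank_swap_adj_le m : (m <= s)%N -> rank (swap_adj w s) m = rank w m.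
Proof.
elim: m => [|m IH] le_ms; first by rewrite !rank0.
by rewrite !rankS (IH (ltnW le_ms)) nth_swap_adj (ltn_eqF le_ms) (ltn_eqF (leqW le_ms)).
Qed.

Lemma rank_swap_adj_s1 :
  rank (swap_adj w s) s.+1 = rank w s + value (nth None w s.+1).
Proof. by rewrite rankS rank_swap_adj_le // nth_swap_adj eqxx. Qed.

Lemma rank_swap_adj_ge m : (s.+2 <= m)%N -> rank (swap_adj w s) m = rank w m.
Proof.
move=> le_s2m; rewrite -(subnKC le_s2m); elim: (m - s.+2)%N => [|e IH].
  rewrite addn0 rankS rank_swap_adj_s1 nth_swap_adj eqxx (gtn_eqF (ltnSn s)).
  by rewrite [in RHS]rankS [in RHS]rankS addrAC.
rewrite addnS rankS [in RHS]rankS IH nth_swap_adj.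
have [ne_s ne_s1] : (s.+2 + e != s) /\ (s.+2 + e != s.+1) by split; lia.
by rewrite (negbTE ne_s) (negbTE ne_s1).
Qed.

End SwapAdj.

Lemma sweep_le_total w : total (sweep_le w).
Proof. move=> i j; rewrite /sweep_le; lia. Qed.

Lemma sweep_le_trans w : transitive (sweep_le w).
Proof. move=> j i l; rewrite /sweep_le; lia. Qed.

Lemma sweep_le_anti w i j : sweep_le w i j -> sweep_le w j i -> i = j.
Proof. rewrite /sweep_le; lia. Qed.

Definition sweep_order w := sort (sweep_le w) (iota 0 (size w)).

Lemma size_sweep_order w : size (sweep_order w) = size w.
Proof. by rewrite size_sort size_iota. Qed.

Lemma sweep_order_ltn w p q : (p < size w)%N -> (q < size w)%N ->
  (q < p)%N = sweep_le w (nth 0%N (sweep_order w) q) (nth 0%N (sweep_order w) p)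
              && (nth 0%N (sweep_order w) q != nth 0%N (sweep_order w) p).
Proof.
move=> lt_pn lt_qn.
have uniq_σ : uniq (sweep_order w) by rewrite sort_uniq iota_uniq.
have sorted_σ : sorted (sweep_le w) (sweep_order w).
  exact/sort_sorted/sweep_le_total.
rewrite -size_sweep_order in lt_pn lt_qn; rewrite nth_uniq //.
case: (ltngtP q p) => [lt_qp|lt_pq|->]; last by rewrite andbF.
  by rewrite (sorted_ltn_nth (@sweep_le_trans w) 0%N sorted_σ q p).
apply/esym/negbTE; apply/andP=> -[le_qp _].
have le_pq := sorted_ltn_nth (@sweep_le_trans w) 0%N sorted_σ p q lt_pn lt_qn lt_pq.
have /eqP := sweep_le_anti le_qp le_pq; rewrite nth_uniq // => /eqP eq_qp.
by move: lt_pq; rewrite eq_qp ltnn.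
Qed.

Lemma sum_sweep_order (V : nmodType) w (G : nat -> V) :
  \sum_(0 <= p < size w) G (nth 0%N (sweep_order w) p) = \sum_(0 <= i < size w) G i.
Proof.
transitivity (\sum_(x <- sweep_order w) G x).
  by rewrite [RHS](big_nth 0%N) size_sweep_order.
by rewrite (perm_big _ (permEl (perm_sort _ _))) /index_iota subn0.
Qed.

Lemma size_sweep w : size (sweep w) = size w.
Proof. by rewrite size_map size_sweep_order. Qed.

Lemma nth_sweep w p : (p < size w)%N ->
  nth None (sweep w) p = nth None w (nth 0%N (sweep_order w) p).
Proof. by move=> lt_pn; rewrite (nth_map 0%N) // size_sweep_order. Qed.

Definition sum_but_pair (V : nmodType) (s n : nat) (F : nat -> V) : V :=
  \sum_(0 <= i < s) F i + \sum_(s.+2 <= i < n) F i.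

Lemma big_nat_split_pair (V : nmodType) s n (F : nat -> V) : (s.+1 < n)%N ->
  \sum_(0 <= i < n) F i = sum_but_pair s n F + (F s + F s.+1).
Proof.
move=> lt_s1n; rewrite /sum_but_pair (@big_cat_nat _ _ _ s) ?(ltnW (ltnW lt_s1n)) //=.
rewrite [\sum_(s <= i < n) _]big_ltn ?(ltnW lt_s1n) // [\sum_(s.+1 <= i < n) _]big_ltn //.
by rewrite -addrA [in RHS](addrC (\sum_(s.+2 <= i < n) F i)) !addrA.
Qed.

Lemma eq_sum_but_pair (V : nmodType) s n (F G : nat -> V) :
  (forall i, i != s -> i != s.+1 -> F i = G i) ->
  sum_but_pair s n F = sum_but_pair s n G.
Proof.
move=> eqFG; rewrite /sum_but_pair.
by congr (_ + _); apply: eq_big_nat => i /andP[? ?]; apply: eqFG; lia.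
Qed.

Lemma sum_but_pairB (V : zmodType) s n (F G : nat -> V) :
  sum_but_pair s n (fun i => F i - G i) = sum_but_pair s n F - sum_but_pair s n G.
Proof. by rewrite /sum_but_pair !sumrB addrACA opprD. Qed.

Section PairSum.
Variables (T : Type) (K : T -> T -> int).

Definition pair_sum (f : nat -> T) (n : nat) : int :=
  \sum_(0 <= i < n) \sum_(0 <= j < n) K (f i) (f j).

Definition cross (x y z : T) : int := K z x + K z y + K x z + K y z.

Definition block (x y : T) : int := K x x + K x y + K y x + K y y.

Variables (s n : nat).
Hypothesis lt_s1n : (s.+1 < n)%N.

Lemma pair_sum_split (f : nat -> T) :
  pair_sum f n =
  sum_but_pair s n (fun i => sum_but_pair s n (fun j => K (f i) (f j)))
  + sum_but_pair s n (fun i => cross (f s) (f s.+1) (f i))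
  + block (f s) (f s.+1).
Proof.
rewrite /pair_sum (big_nat_split_pair _ lt_s1n).
under [X in X + _]eq_sum_but_pair do rewrite (big_nat_split_pair _ lt_s1n).
rewrite !(big_nat_split_pair _ lt_s1n) /sum_but_pair /cross /block !big_split /=.
ring.
Qed.

Lemma pair_sum_local_diff (f g : nat -> T) :
  (forall i, i != s -> i != s.+1 -> f i = g i) ->
  pair_sum f n - pair_sum g n =
  sum_but_pair s n (fun i => cross (f s) (f s.+1) (f i) - cross (g s) (g s.+1) (g i))
  + (block (f s) (f s.+1) - block (g s) (g s.+1)).
Proof.
move=> eq_fg; rewrite !pair_sum_split sum_but_pairB.
have -> : sum_but_pair s n (fun i => sum_but_pair s n (fun j => K (f i) (f j)))
        = sum_but_pair s n (fun i => sum_but_pair s n (fun j => K (g i) (g j))).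
  apply: eq_sum_but_pair => i ne_is ne_is1; rewrite eq_fg //.
  by apply: eq_sum_but_pair => j ne_js ne_js1; rewrite eq_fg.
ring.
Qed.

End PairSum.

Definition letter (w : seq step) (i : nat) : nat * step * int :=
  (i, nth None w i, rank w i).

Definition dinv_kernel (x y : nat * step * int) : int :=
  let: (i, a, ri) := x in let: (j, b, rj) := y in
  (if [&& (i < j)%N, a == None, is_red b & rj <= ri <= rj + value b] then 1 else 0)
  + (if [&& (i < j)%N, is_red a & is_red b] then
      (if (rj <= ri) && (ri + value a < rj + value b)
       then (rj + value b) - (ri + value a) else 0)
      + (if (ri < rj) && (rj + value b < ri + value a)
         then (ri + value a) - (rj + value b) else 0)
     else 0).

Definition sweep_area_kernel (x y : nat * step * int) : int :=
  let: (i, a, ri) := x in let: (j, b, rj) := y in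
  if is_red a && ((rj < ri) || (rj == ri) && (i <= j)%N) && (j != i)
  then value b else 0.

Definition defect_kernel x y := dinv_kernel x y - sweep_area_kernel x y.

Definition above (h x : int) : int := if h < x then 1 else 0.

Lemma dinv_pair_sum w : dinv w = pair_sum dinv_kernel (letter w) (size w).
Proof.
rewrite /dinv /sweep_dinv /red_dinv /pair_sum big_mkord -big_split /=.
apply: eq_bigr => i _; rewrite big_mkord.
rewrite (big_mkcond _ (fun j => 1)) (big_mkcond _ (fun j => _ + _)) -big_split /=.
apply: eq_bigr => j _; rewrite /dinv_kernel /letter /= !rdotE.
by case: ifP => _; case: ifP => _; rewrite ?addr0 ?add0r.
Qed.

Lemma area_sweep_pair_sum w :
  area (sweep w) = pair_sum sweep_area_kernel (letter w) (size w).
Proof.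
pose σ := nth 0%N (sweep_order w).
transitivity (\sum_(0 <= p < size w) \sum_(0 <= q < size w)
                sweep_area_kernel (letter w (σ p)) (letter w (σ q))); last first.
  rewrite (sum_sweep_order w (fun i => \sum_(0 <= q < size w)
                                 sweep_area_kernel (letter w i) (letter w (σ q)))).
  apply: eq_big_nat => i _.
  exact: (sum_sweep_order w (fun j => sweep_area_kernel (letter w i) (letter w j))).
rewrite /area size_sweep big_mkcond [RHS]big_mkord; apply: eq_bigr => p _.
rewrite nth_sweep // /rank [in RHS]big_mkord.
rewrite (big_ord_widen (size w) (fun i => value (nth None (sweep w) i))
                      (ltnW (ltn_ord p))) big_mkcond; case: ifP => red_p; last first.
  by rewrite big1 // => q _; rewrite /sweep_area_kernel /letter /= red_p.
apply: eq_bigr => q _; rewrite (sweep_order_ltn (ltn_ord p) (ltn_ord q)) nth_sweep //.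
by rewrite /sweep_area_kernel /letter /= red_p /sweep_le.
Qed.

Definition defect w := dinv w - area (sweep w).

Lemma defect_pair_sum w : defect w = pair_sum defect_kernel (letter w) (size w).
Proof.
rewrite /defect dinv_pair_sum area_sweep_pair_sum /pair_sum -sumrB.
by apply: eq_bigr => i _; rewrite -sumrB.
Qed.

Lemma is_red_Some k : is_red (Some k). Proof. by []. Qed.

Ltac kernel_cases :=
  rewrite /cross /block /defect_kernel /dinv_kernel /sweep_area_kernel /above /=;
  rewrite ?is_red_Some /=;
  repeat (case: ifP => ?; try (exfalso; lia)); lia.

Lemma cross_defect_left i s a (ri r : int) (k : nat) :
  (i < s)%N -> (0 < k)%N -> (is_red a -> ri <= r) ->
  cross defect_kernel (s, None, r) (s.+1, Some k, r - 1) (i, a, ri)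
  - cross defect_kernel (s, Some k, r) (s.+1, None, r + k%:Z) (i, a, ri)
  = above (r + k%:Z - 1) (ri + value a) - above (r + k%:Z - 1) ri.
Proof.
move=> lt_is k_gt0 red_le.
by case: a red_le => [ki /(_ isT) red_le|_]; kernel_cases.
Qed.

Lemma cross_defect_right i s a (ri r : int) (k : nat) :
  (s.+1 < i)%N -> (0 < k)%N -> (is_red a -> ri < r) ->
  cross defect_kernel (s, None, r) (s.+1, Some k, r - 1) (i, a, ri)
  - cross defect_kernel (s, Some k, r) (s.+1, None, r + k%:Z) (i, a, ri)
  = above (r - 1) (ri + value a) - above (r - 1) ri.
Proof.
move=> lt_s1i k_gt0 red_lt.
by case: a red_lt => [ki /(_ isT) red_lt|_]; kernel_cases.
Qed.

Lemma block_defect s (r : int) (k : nat) : (0 < k)%N ->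
  block defect_kernel (s, None, r) (s.+1, Some k, r - 1)
  - block defect_kernel (s, Some k, r) (s.+1, None, r + k%:Z) = 1.
Proof. by move=> k_gt0; kernel_cases. Qed.

Lemma defect_swap_adj w s (k : nat) :
  (0 < k)%N -> (s.+1 < size w)%N ->
  nth None w s = Some k -> nth None w s.+1 = None ->
  0 < rank w s -> rank w (size w) = 0 ->
  (forall j, (j < s)%N -> is_red (nth None w j) -> rank w j <= rank w s) ->
  (forall j, (s < j < size w)%N -> is_red (nth None w j) -> rank w j < rank w s) ->
  defect (swap_adj w s) = defect w.
Proof.
move=> k_gt0 lt_s1n w_s w_s1 r_gt0 rank_end left_le right_lt.
set r := rank w s; set w' := swap_adj w s.
have rank_s1 : rank w s.+1 = r + k%:Z by rewrite rankS w_s.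
have letter_s : letter w s = (s, Some k, r) by rewrite /letter w_s.
have letter_s1 : letter w s.+1 = (s.+1, None, r + k%:Z) by rewrite /letter w_s1 rank_s1.
have letter'_s : letter w' s = (s, None, r).
  by rewrite /letter nth_swap_adj // eqxx w_s1 rank_swap_adj_le.
have letter'_s1 : letter w' s.+1 = (s.+1, Some k, r - 1).
  rewrite /letter nth_swap_adj // (gtn_eqF (ltnSn s)) eqxx w_s.
  by rewrite rank_swap_adj_s1 // w_s1.
have letter'_out i : i != s -> i != s.+1 -> letter w' i = letter w i.
  move=> ne_is ne_is1; rewrite /letter nth_swap_adj // (negbTE ne_is) (negbTE ne_is1).
  case: (leqP i s) => [le_is|lt_si]; first by rewrite rank_swap_adj_le.
  by rewrite rank_swap_adj_ge //; lia.
apply/eqP; rewrite -subr_eq0 !defect_pair_sum size_swap_adj //.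
rewrite (pair_sum_local_diff _ lt_s1n letter'_out).
rewrite letter_s letter_s1 letter'_s letter'_s1 block_defect // /sum_but_pair.
rewrite (telescope_sumr_eq (fun i => above (r + k%:Z - 1) (rank w i))) //; last first.
  move=> i /andP[_ lt_is]; rewrite letter'_out; [|lia|lia].
  by rewrite /letter rankS; apply: cross_defect_left => // /left_le; apply.
rewrite (telescope_sumr_eq (fun i => above (r - 1) (rank w i))) //; last first.
  move=> i /andP[lt_s1i lt_in]; rewrite letter'_out; [|lia|lia].
  by rewrite /letter rankS; apply: cross_defect_right => // /right_lt; apply; lia.
rewrite rank0 rank_end [rank w s.+2]rankS rank_s1 w_s1 /above.
by move: r_gt0; rewrite -/r /=; do ![case: ifP => ?]; lia.
Qed.

Theorem lemma3p3 (k : seq nat) (Dbar : seq step) (s : nat) :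
  all (fun x => 0 < x)%N k ->
  is_Dyck k Dbar ->
  0 < area Dbar ->
  (* s is the position of the rightmost red arrow of maximal starting rank *)
  (s < size Dbar)%N ->
  is_red (nth None Dbar s) ->
  (forall j, (j < size Dbar)%N -> is_red (nth None Dbar j) ->
     rank Dbar j <= rank Dbar s) ->
  (forall j, (s < j < size Dbar)%N -> is_red (nth None Dbar j) ->
     rank Dbar j < rank Dbar s) ->
  dinv Dbar - dinv (swap_adj Dbar s)
    = area (sweep Dbar) - area (sweep (swap_adj Dbar s)).
Proof.
move=> k_pos dyck area_gt0 lt_sn red_s max_s right_lt.
case Ds: (nth None Dbar s) red_s => [k0|] // _.
have k0_gt0 := is_Dyck_red_gt0 k_pos dyck Ds.
have r_gt0 := area_gt0_max_rank area_gt0 max_s.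
have rank_end := is_Dyck_rank_size dyck.
have rank_s1 : rank Dbar s.+1 = rank Dbar s + k0%:Z by rewrite rankS Ds.
have lt_s1n : (s.+1 < size Dbar)%N.
  rewrite ltn_neqAle lt_sn andbT; apply/eqP => eq_s1n.
  by move: rank_end; rewrite -eq_s1n rank_s1; lia.
have Ds1 : nth None Dbar s.+1 = None.
  case Ds1: (nth None Dbar s.+1) => [k1|] //.
  by have := right_lt s.+1; rewrite ltnSn lt_s1n Ds1 rank_s1 => /(_ isT isT); lia.
have left_le j : (j < s)%N -> is_red (nth None Dbar j) -> rank Dbar j <= rank Dbar s.
  by move=> lt_js; apply: max_s; lia.
have := defect_swap_adj k0_gt0 lt_s1n Ds Ds1 r_gt0 rank_end left_le right_lt.
by rewrite /defect; lia.
Qed.
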